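(* For each $K\in\mathbb{N}$, there exists a $\Delta\in\mathbb{N}$ such that the following holds. If $G$ is a finite graph with $\delta(x,y)\le K$ for all $x,y\in V(G)$, then either $G$ or its complement $\overline{G}$ has maximum degree at most $\Delta$.
   Context: All graphs are finite and simple. For a vertex $x$ of a graph $G$, $\Gamma(x)$ denotes its neighbourhood. The neighbourhood-distance between two vertices $x,y$ is $\delta(x,y)=|(\Gamma(x)\setminus \{y\})\,\triangle\, (\Gamma(y)\setminus\{x\})|$ (with $\delta(x,x)=0$), where $\triangle$ is symmetric difference. $\overline{G}$ is the complement of $G$. *)

From mathcomp Require Import all_boot.
Set Implicit Arguments. Unset Strict Implicit. Unset Printing Implicit Defensive.

Definition simple_graph (T : finType) (e : rel T) : Prop :=
  symmetric e /\ irreflexive e.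

Definition nbhd (T : finType) (e : rel T) (x : T) : {set T} := [set y | e x y].

Definition symdiff (T : finType) (A B : {set T}) : {set T} := (A :\: B) :|: (B :\: A).

Definition ndist (T : finType) (e : rel T) (x y : T) : nat :=
  if x == y then 0 else #|symdiff (nbhd e x :\ y) (nbhd e y :\ x)|.

Definition compl_rel (T : finType) (e : rel T) : rel T :=
  fun x y => (x != y) && ~~ e x y.

Definition maxdeg_le (T : finType) (e : rel T) (D : nat) : Prop :=
  forall x : T, #|nbhd e x| <= D.

From mathcomp Require Import all_boot.
From mathcomp Require Import zify.

Set Implicit Arguments. Unset Strict Implicit. Unset Printing Implicit Defensive.

(* Moving from x to y changes the neighbourhood by at most delta(x,y) vertices
   plus x itself, so all degrees lie within K + 1 of each other.  Fix x, let A be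
   its neighbourhood and B its non-neighbourhood.  Each a in A has at most
   delta(x,a) <= K neighbours in B, and each b in B is adjacent to all but at
   most delta(x,b) <= K vertices of A; counting the A-B edges both ways gives
   |B| (|A| - K) <= |A| K, which forces |A| <= 2K or |B| <= 2K.  If some vertex
   has degree at most 2K then every degree is at most 3K + 1; otherwise every
   vertex has co-degree at most 2K. *)

Lemma sum_card_rel_exchange (T : finType) (r : rel T) (A B : {set T}) :
  \sum_(a in A) #|[set b in B | r a b]| = \sum_(b in B) #|[set a in A | r a b]|.
Proof.
have card_sum (C : {set T}) (P : pred T) :
    #|[set c in C | P c]| = \sum_(c in C) (P c : nat).
  by rewrite -sum1_card big_mkcond [RHS]big_mkcond; apply: eq_bigr => c _;
     rewrite inE; case: (c \in C); case: (P c).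
under eq_bigr do rewrite card_sum.
under [RHS]eq_bigr do rewrite card_sum.
exact: exchange_big.
Qed.

Lemma double_count_bound (a b K : nat) :
  b * (a - K) <= a * K -> a <= K.*2 \/ b <= K.*2.
Proof.
case: (leqP a K.*2) => ha; first by left.
case: (leqP b K.*2) => hb; first by right.
have : K.*2.+1 * (a - K) <= b * (a - K) by rewrite leq_mul2r hb orbT.
nia.
Qed.

Section NeighbourhoodDistance.

Variables (T : finType) (e : rel T).
Hypotheses (e_sym : symmetric e) (e_irr : irreflexive e).

Lemma card_nbhd_le_ndist (x y : T) :
  #|nbhd e y| <= #|nbhd e x| + ndist e x y + 1.
Proof.
rewrite /ndist; case: eqP => [->|/eqP nxy]; first by rewrite addn0 leq_addr.
set D := symdiff _ _.
have sub : nbhd e y \subset (D :|: nbhd e x) :|: [set x].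
  apply/subsetP => z; rewrite !inE => eyz.
  have nzy : z != y by apply: contraTneq eyz => ->; rewrite e_irr.
  by rewrite eyz nzy; case: (z =P x); case: (e x z); rewrite ?orbT.
apply: leq_trans (subset_leq_card sub) _.
apply: leq_trans (leq_card_setU _ _) _.
by rewrite cards1 leq_add2r addnC leq_card_setU.
Qed.

Lemma card_adj_nonnbhd_le (x a : T) :
  e x a -> #|[set b in nbhd (compl_rel e) x | e a b]| <= ndist e x a.
Proof.
move=> exa; have nxa : x != a by apply: contraTneq exa => ->; rewrite e_irr.
rewrite /ndist (negbTE nxa); apply: subset_leq_card; apply/subsetP => b.
rewrite !inE /compl_rel => /andP [/andP [nxb nexb] eab].
have nba : b != a by apply: contraTneq eab => ->; rewrite e_irr.
by rewrite eab (negbTE nexb) nba eq_sym nxb.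
Qed.

Lemma card_nonadj_nbhd_le (x b : T) :
  b \in nbhd (compl_rel e) x -> #|[set a in nbhd e x | ~~ e a b]| <= ndist e x b.
Proof.
rewrite inE /compl_rel => /andP [nxb nexb].
rewrite /ndist (negbTE nxb); apply: subset_leq_card; apply/subsetP => a.
rewrite !inE => /andP [exa neab].
have nab : a != b by apply: contraNneq nexb => <-.
by rewrite exa nab e_sym (negbTE neab) andbF.
Qed.

Variable K : nat.
Hypothesis ndist_le : forall x y : T, ndist e x y <= K.

Lemma card_nbhd_or_compl_le (x : T) :
  #|nbhd e x| <= K.*2 \/ #|nbhd (compl_rel e) x| <= K.*2.
Proof.
set A := nbhd e x; set B := nbhd (compl_rel e) x.
apply: double_count_bound.
have edges_le : \sum_(a in A) #|[set b in B | e a b]| <= #|A| * K.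
  rewrite -sum_nat_const; apply: leq_sum => a; rewrite inE => exa.
  exact: leq_trans (card_adj_nonnbhd_le exa) (ndist_le x a).
have edges_ge : #|B| * (#|A| - K) <= \sum_(b in B) #|[set a in A | e a b]|.
  rewrite -sum_nat_const; apply: leq_sum => b Bb.
  have split_A : #|A| = #|[set a in A | e a b]| + #|[set a in A | ~~ e a b]|.
    by rewrite -(cardsID [set a | e a b] A); congr (_ + _); apply: eq_card => a;
       rewrite !inE // andbC.
  have nonadj_le : #|[set a in A | ~~ e a b]| <= K.
    exact: leq_trans (card_nonadj_nbhd_le Bb) (ndist_le x b).
  lia.
by apply: leq_trans edges_ge _; rewrite -sum_card_rel_exchange.
Qed.

End NeighbourhoodDistance.

Theorem proposition2p1 :
  forall K : nat, exists Delta : nat,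
    forall (T : finType) (e : rel T),
      simple_graph e ->
      (forall x y : T, ndist e x y <= K) ->
      maxdeg_le e Delta \/ maxdeg_le (compl_rel e) Delta.
Proof.
move=> K; exists (3 * K + 1) => T e [e_sym e_irr] ndist_le.
have [x small_x | no_small] := pickP (fun x => #|nbhd e x| <= K.*2).
  left => y; have := card_nbhd_le_ndist e_irr x y; have := ndist_le x y; lia.
right => y.
case: (card_nbhd_or_compl_le e_sym e_irr ndist_le y) => [big_y|]; last lia.
by rewrite no_small in big_y.
Qed.
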